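(* Let $k$ be a field, $Q$ a finite connected quiver without oriented cycles with vertex set $Q_0$ and arrow set $Q_1$, and $Z$ a minimal set of paths of length at least two. Then $$\dim_k H^1\big(kQ/\langle Z\rangle,\,kQ/\langle Z\rangle\big)\geq 1-|Q_0|+|Q_1|.$$
   Context: $kQ$ is the path algebra of $Q$, $\langle Z\rangle$ is the two-sided ideal generated by $Z$, and $H^1$ denotes first Hochschild cohomology. $Z$ minimal means no path in $Z$ has a strict sub-path belonging to $Z$. *)

From HB Require Import structures.
From mathcomp Require Import all_boot all_order all_algebra.
From mathcomp Require Import boolp.

Set Implicit Arguments.
Unset Strict Implicit.
Unset Printing Implicit Defensive.

Import Order.TTheory GRing.Theory.
Local Open Scope ring_scope.

Record quiver := Quiver {
  Q0 : finType;
  Q1 : finType;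
  qsrc : Q1 -> Q0;
  qtgt : Q1 -> Q0 }.

Definition arrow_comp (Q : quiver) : rel (Q1 Q) :=
  fun a b => qtgt a == qsrc b.

Definition acyclic (Q : quiver) : Prop :=
  forall (a : Q1 Q) (l : seq (Q1 Q)),
    path (@arrow_comp Q) a l -> qtgt (last a l) != qsrc a.

Definition qadj (Q : quiver) : rel (Q0 Q) :=
  fun u v => [exists a : Q1 Q, ((qsrc a == u) && (qtgt a == v))
                            || ((qsrc a == v) && (qtgt a == u))].

Definition connected_quiver (Q : quiver) : Prop :=
  (0 < #|Q0 Q|)%N /\ forall u v : Q0 Q, connect (@qadj Q) u v.

(* A (raw) path is a starting vertex together with a sequence of arrows
   (composed left to right); the empty sequence is the trivial path e_v. *)
Definition is_qpath (Q : quiver) (x : Q0 Q * seq (Q1 Q)) : bool :=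
  if x.2 is a :: l then (qsrc a == x.1) && path (@arrow_comp Q) a l else true.

(* Paths of length <= #|Q0|.  In a quiver without oriented cycles every
   path has length <= #|Q0| - 1, so this type contains ALL paths of Q
   (and is a finite type, which gives a finite basis of kQ). *)
Definition qpath (Q : quiver) :=
  {x : Q0 Q * (#|Q0 Q|).-bseq (Q1 Q) | is_qpath (x.1, val x.2)}.

Definition pstart (Q : quiver) (p : qpath Q) : Q0 Q := (val p).1.
Definition parrows (Q : quiver) (p : qpath Q) : seq (Q1 Q) := val (val p).2.
Definition plen (Q : quiver) (p : qpath Q) : nat := size (parrows p).
Definition pend (Q : quiver) (p : qpath Q) : Q0 Q :=
  if parrows p is a :: l then qtgt (last a l) else pstart p.

Definition pconcat (Q : quiver) (p q r : qpath Q) : bool :=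
  [&& pend p == pstart q, pstart r == pstart p
    & parrows r == parrows p ++ parrows q].

Definition subpath (Q : quiver) (z' z : qpath Q) : bool :=
  [exists p : qpath Q, exists q : qpath Q, exists w : qpath Q,
     pconcat p z' w && pconcat w q z].

Definition minimal_paths (Q : quiver) (Z : {set qpath Q}) : Prop :=
  forall z z', z \in Z -> z' \in Z -> subpath z' z -> z' = z.

Definition kQ (k : fieldType) (Q : quiver) := {ffun qpath Q -> k^o}.

Definition pvec (k : fieldType) (Q : quiver) (p : qpath Q) : kQ k Q :=
  [ffun r => if r == p then (1 : k) else 0].

Definition kQmul (k : fieldType) (Q : quiver) (x y : kQ k Q) : kQ k Q :=
  [ffun r => \sum_(p : qpath Q) \sum_(q : qpath Q | pconcat p q r)
               (x p : k) * (y q : k)].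

Definition pideal (k : fieldType) (Q : quiver) (Z : {set qpath Q})
  : {vspace kQ k Q} :=
  (\sum_(p : qpath Q) \sum_(z in Z) \sum_(q : qpath Q)
      <[kQmul (kQmul (pvec k p) (pvec k z)) (pvec k q)]>)%VS.

Definition ldim (k : fieldType) (vT : vectType k) (S : vT -> Prop) : nat :=
  \max_(n < (\dim (fullv : {vspace vT})).+1 |
        `[< exists U : {vspace vT}, \dim U = n /\ forall f, f \in U -> S f >])
     (n : nat).

(* H^1(A,A) = Der_k(A,A) / Inn(A) (1-cocycles modulo 1-coboundaries of  *)
(* the Hochschild complex).  A k-linear endomorphism of A = kQ/I is the *)
(* same as a linear f : kQ -> kQ with f(I) <= I, modulo those f with    *)
(* image in I.  Hence:                                                  *)
(*   derL  = lifts of derivations of A,                                 *)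
(*   innL  = lifts of inner derivations x |-> x a - a x of A,           *)
(*   nullL = lifts of the zero map of A,                                *)

Section HH1.
Variables (k : fieldType) (Q : quiver) (Z : {set qpath Q}).
Local Notation A := (kQ k Q).
Local Notation I := (pideal k Z).
Local Notation mul := (@kQmul k Q).

Definition derL (f : 'End(A)) : Prop :=
  (forall x, x \in I -> f x \in I) /\
  (forall x y, f (mul x y) - (mul x (f y) + mul (f x) y) \in I).

Definition nullL (f : 'End(A)) : Prop := forall x, f x \in I.

Definition innL (f : 'End(A)) : Prop :=
  exists a : A, forall x, f x - (mul x a - mul a x) \in I.

Definition dim_Der : nat := (ldim derL - ldim nullL)%N.
Definition dim_Inn : nat := (ldim innL - ldim nullL)%N.

Definition dim_HH1 : nat := (dim_Der - dim_Inn)%N.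
End HH1.

(* The arrow-counting maps D_a, which multiply a path by the number of
   occurrences of the arrow a in it, are derivations of kQ preserving the
   monomial ideal <Z>, and they are linearly independent.  If an inner
   derivation [-, x] lies in their span, its coefficient on D_a is
   lambda(t a) - lambda(s a), where lambda(v) is the coefficient of e_v in x:
   it can be read off on the arrow a itself, because no element of <Z> has a
   nonzero coefficient on a path of length < 2.  These coboundaries span a
   space of dimension at most |Q0| - 1, hence
   dim Der - dim Inn >= |Q1| - (|Q0| - 1). *)

From HB Require Import structures.
From mathcomp Require Import all_boot all_order all_algebra.
From mathcomp Require Import boolp.
From mathcomp Require Import zify ring.

Set Implicit Arguments.
Unset Strict Implicit.
Unset Printing Implicit Defensive.

Import Order.TTheory GRing.Theory.
Local Open Scope ring_scope.

Section Ldim.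
Variables (k : fieldType) (vT : vectType k).
Implicit Type S : vT -> Prop.

Lemma ldim_sup S (U : {vspace vT}) :
  (forall f, f \in U -> S f) -> (\dim U <= ldim S)%N.
Proof.
move=> US; have dimU : (\dim U < (\dim (fullv : {vspace vT})).+1)%N.
  by rewrite ltnS dimvS ?subvf.
rewrite /ldim (bigop.bigmax_sup (Ordinal dimU)) //.
by apply/asboolP; exists U.
Qed.

Lemma ldim_attained S : S 0 ->
  exists U : {vspace vT}, \dim U = ldim S /\ forall f, f \in U -> S f.
Proof.
move=> S0.
have S0dim : `[< exists U : {vspace vT}, \dim U = 0%N /\ forall f, f \in U -> S f >].
  apply/asboolP; exists 0%VS; split=> [|f]; first exact: dimv0.
  by rewrite memv0 => /eqP ->.
rewrite /ldim (bigop.bigmax_eq_arg ord0) //.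
by case: arg_maxnP => // i /asboolP.
Qed.

Lemma ldim_le S1 S2 : (forall f, S1 f -> S2 f) -> (ldim S1 <= ldim S2)%N.
Proof.
move=> S12; apply/bigop.bigmax_leqP => i /asboolP[U [<- US1]].
by apply: ldim_sup => f /US1/S12.
Qed.

End Ldim.

Section Paths.
Variable Q : quiver.
Implicit Types (p q r s t : qpath Q) (v : Q0 Q) (a : Q1 Q) (l : seq (Q1 Q)).

Fixpoint walk v l : bool :=
  if l is a :: l' then (qsrc a == v) && walk (qtgt a) l' else true.

Definition walk_end v l : Q0 Q := if l is a :: l' then qtgt (last a l') else v.

Lemma walk_end_cons v a l : walk_end v (a :: l) = walk_end (qtgt a) l.
Proof. by case: l. Qed.

Lemma walk_end_cat v l1 l2 : walk_end v (l1 ++ l2) = walk_end (walk_end v l1) l2.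
Proof. by elim: l1 v => [//|a l1 IH v]; rewrite cat_cons !walk_end_cons IH. Qed.

Lemma walk_cat v l1 l2 : walk v (l1 ++ l2) = walk v l1 && walk (walk_end v l1) l2.
Proof. by elim: l1 v => [//|a l1 IH v]; rewrite cat_cons walk_end_cons /= IH andbA. Qed.

Lemma is_qpathE v l : is_qpath (v, l) = walk v l.
Proof.
case: l => //= a l; congr (_ && _).
by elim: l a => //= b l IH a; rewrite IH /arrow_comp eq_sym.
Qed.

Lemma pendE p : pend p = walk_end (pstart p) (parrows p).
Proof. by []. Qed.

Lemma qpath_walk p : walk (pstart p) (parrows p).
Proof. by case: p => [[v l] /= wl]; rewrite -is_qpathE. Qed.

Lemma plen_max p : (plen p <= #|Q0 Q|)%N.
Proof. exact: size_bseq. Qed.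

Lemma qpath_inj p q : pstart p = pstart q -> parrows p = parrows q -> p = q.
Proof.
move=> eq_s eq_a; apply: val_inj; apply: injective_projections => //.
exact: val_inj.
Qed.

Lemma qpath_of_walk v l : walk v l -> (size l <= #|Q0 Q|)%N ->
  exists p, pstart p = v /\ parrows p = l.
Proof.
move=> wl sl; have wl' : is_qpath (v, val (Bseq sl)) by rewrite is_qpathE.
by exists (exist _ (v, Bseq sl) wl').
Qed.

Lemma arrow_qpath a : exists p, pstart p = qsrc a /\ parrows p = [:: a].
Proof.
apply: qpath_of_walk; first by rewrite /= eqxx.
by apply/card_gt0P; exists (qsrc a).
Qed.

Definition epath v : qpath Q := exist _ (v, [bseq]) isT.

Lemma epathE p v : (p == epath v) = (pstart p == v) && (parrows p == [::]).
Proof.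
apply/eqP/andP => [->//|[/eqP sp /eqP ap]].
exact: qpath_inj.
Qed.

Lemma pconcat_plen p q r : pconcat p q r -> plen r = (plen p + plen q)%N.
Proof. by case/and3P=> _ _ /eqP ar; rewrite /plen ar size_cat. Qed.

Lemma pconcat_uniq p q r1 r2 : pconcat p q r1 -> pconcat p q r2 -> r1 = r2.
Proof.
case/and3P=> _ /eqP s1 /eqP a1 /and3P[_ /eqP s2 /eqP a2].
by apply: qpath_inj; rewrite ?s1 ?s2 ?a1 ?a2.
Qed.

Lemma pconcat_unit_r p q : pconcat p q p = (q == epath (pend p)).
Proof.
rewrite epathE /pconcat eqxx eq_sym -{1}[parrows p]cats0 eqseq_cat //.
by rewrite eqxx /= (eq_sym [::]).
Qed.

Lemma pconcat_unit_l p q : pconcat q p p = (q == epath (pstart p)).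
Proof.
rewrite epathE /pconcat.
have -> : (parrows p == parrows q ++ parrows p) = (parrows q == [::]).
  apply/eqP/eqP => [/(congr1 size)|->//]; rewrite size_cat => sp.
  by apply: size0nil; lia.
case: (parrows q =P [::]) => [aq|_]; last by rewrite !andbF.
by rewrite pendE aq /= !andbT (eq_sym (pstart p)) andbb.
Qed.

Lemma qpath_prefix t l1 l2 : parrows t = l1 ++ l2 ->
  exists s, pstart s = pstart t /\ parrows s = l1.
Proof.
move=> eq_t; apply: qpath_of_walk.
  by move: (qpath_walk t); rewrite eq_t walk_cat => /andP[].
by move: (plen_max t); rewrite /plen eq_t size_cat; lia.
Qed.

Lemma qpath_suffix t l1 l2 : parrows t = l1 ++ l2 ->
  exists s, pstart s = walk_end (pstart t) l1 /\ parrows s = l2.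
Proof.
move=> eq_t; apply: qpath_of_walk.
  by move: (qpath_walk t); rewrite eq_t walk_cat => /andP[].
by move: (plen_max t); rewrite /plen eq_t size_cat; lia.
Qed.

Lemma pconcat_pend p q r : pconcat p q r -> pend r = pend q.
Proof.
by case/and3P=> /eqP pq /eqP rp /eqP ar; rewrite !pendE ar rp walk_end_cat -pendE pq.
Qed.

Definition pconcat3 p q r t :=
  [&& pend p == pstart q, pend q == pstart r, pstart t == pstart p
    & parrows t == parrows p ++ parrows q ++ parrows r].

Lemma pconcat_assocl p q r t :
  (exists s, pconcat p q s && pconcat s r t) <-> pconcat3 p q r t.
Proof.
split=> [[s /andP[pqs srt]]|/and4P[/eqP pq /eqP qr /eqP tp /eqP eq_t]].
  have end_s := pconcat_pend pqs.
  move: pqs srt => /and3P[/eqP pq /eqP sp /eqP eq_s] /and3P[/eqP sr /eqP ts /eqP eq_t].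
  apply/and4P; split; apply/eqP => //; first by rewrite -end_s.
    by rewrite ts.
  by rewrite eq_t eq_s catA.
have [s [st eq_s]] := qpath_prefix (etrans eq_t (catA _ _ _)).
exists s; apply/andP; split; apply/and3P; split; apply/eqP => //.
- by rewrite st.
- by rewrite pendE eq_s st tp walk_end_cat -pendE pq -pendE.
- by rewrite eq_s -catA.
Qed.

Lemma pconcat_assocr p q r t :
  (exists s, pconcat q r s && pconcat p s t) <-> pconcat3 p q r t.
Proof.
split=> [[s /andP[/and3P[/eqP qr /eqP sq /eqP eq_s]]]|].
  case/and3P=> /eqP ps /eqP tp /eqP eq_t.
  by apply/and4P; split; apply/eqP; rewrite // ?ps ?eq_t ?eq_s.
case/and4P=> /eqP pq /eqP qr /eqP tp /eqP eq_t.
have [s [ss eq_s]] := qpath_suffix eq_t.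
exists s; apply/andP; split; apply/and3P; split; apply/eqP => //.
- by rewrite ss tp -pendE.
- by rewrite ss tp -pendE.
- by rewrite eq_t eq_s.
Qed.

Definition pcat p q : option (qpath Q) := [pick r | pconcat p q r].

Lemma pcatP p q r : reflect (pcat p q = Some r) (pconcat p q r).
Proof.
rewrite /pcat; case: pickP => [r' pqr'|no_r]; last first.
  by rewrite no_r; constructor.
by apply: (iffP idP) => [/(pconcat_uniq pqr') ->|[<-]].
Qed.

Lemma pcat3l p q r : obind (pcat^~ r) (pcat p q) = [pick t | pconcat3 p q r t].
Proof.
case: pickP => [t /pconcat_assocl[s /andP[/pcatP pqs /pcatP srt]]|no_t].
  by rewrite pqs /= srt.
case pqs: (pcat p q) => [s|] //=; case srt: (pcat s r) => [t|] //.
have /pconcat_assocl : exists s, pconcat p q s && pconcat s r t.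
  by exists s; apply/andP; split; apply/pcatP.
by rewrite no_t.
Qed.

Lemma pcat3r p q r : obind (pcat p) (pcat q r) = [pick t | pconcat3 p q r t].
Proof.
case: pickP => [t /pconcat_assocr[s /andP[/pcatP qrs /pcatP pst]]|no_t].
  by rewrite qrs /= pst.
case qrs: (pcat q r) => [s|] //=; case pst: (pcat p s) => [t|] //.
have /pconcat_assocr : exists s, pconcat q r s && pconcat p s t.
  by exists s; apply/andP; split; apply/pcatP.
by rewrite no_t.
Qed.

Lemma pcatA p q r : obind (pcat^~ r) (pcat p q) = obind (pcat p) (pcat q r).
Proof. by rewrite pcat3l pcat3r. Qed.

End Paths.

Arguments pcat {Q} p q.

Section PathAlgebra.
Variables (k : fieldType) (Q : quiver).
Local Notation A := (kQ k Q).
Local Notation mul := (@kQmul k Q).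
Local Notation pv := (@pvec k Q).
Implicit Types (p q r t : qpath Q) (x y : A) (a : Q1 Q).

Lemma kQmul_bilinear : bilinear_for *:%R *:%R mul.
Proof.
split=> [z c x y|z c x y]; apply/ffunP => r;
  rewrite !ffunE scaler_sumr -big_split; apply: eq_bigr => p _;
  rewrite scaler_sumr -big_split; apply: eq_bigr => q _; rewrite !ffunE.
  by rewrite mulrDl scalerAl.
by rewrite mulrDr scalerAr.
Qed.

HB.instance Definition _ :=
  bilinear_isBilinear.Build k A A A *:%R *:%R mul kQmul_bilinear.

Lemma kQ_scaleE c x r : (c *: x) r = c * x r :> k.
Proof. by rewrite ffunE. Qed.

Lemma kQ_subE x y r : (x - y) r = x r - y r :> k.
Proof. by rewrite !ffunE. Qed.

Lemma pvecE p r : pv p r = (r == p)%:R.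
Proof. by rewrite ffunE; case: eqP. Qed.

Lemma kQ_pvec_decomp x : x = \sum_p x p *: pv p.
Proof.
apply/ffunP => r; rewrite sum_ffunE (bigD1 r) //= big1 => [|p /negbTE rp].
  by rewrite kQ_scaleE pvecE eqxx mulr1 addr0.
by rewrite kQ_scaleE pvecE eq_sym rp mulr0.
Qed.

Lemma mul_pvec_l_coef p y r : mul (pv p) y r = \sum_(q | pconcat p q r) y q.
Proof.
rewrite ffunE (bigD1 p) //= [X in _ + X]big1 ?addr0 => [|p' /negbTE p'p].
  by apply: eq_bigr => q _; rewrite pvecE eqxx mul1r.
by rewrite big1 // => q _; rewrite pvecE p'p mul0r.
Qed.

Lemma mul_pvec_r_coef x q r : mul x (pv q) r = \sum_(p | pconcat p q r) x p.
Proof.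
rewrite ffunE [RHS]big_mkcond; apply: eq_bigr => p _.
rewrite big_mkcond (bigD1 q) //= pvecE eqxx mulr1 big1 ?addr0 // => q' /negbTE q'q.
by rewrite pvecE q'q mulr0; case: ifP.
Qed.

Definition pvo (o : option (qpath Q)) : A := oapp pv 0 o.

Lemma pvoE o r : pvo o r = (o == Some r)%:R.
Proof. by case: o => [p|] /=; rewrite ?pvecE ?ffunE // eq_sym. Qed.

Lemma mul_pvec p q : mul (pv p) (pv q) = pvo (pcat p q).
Proof.
apply/ffunP => r; rewrite mul_pvec_l_coef pvoE.
have -> : (pcat p q == Some r) = pconcat p q r by apply/eqP/pcatP.
rewrite big_mkcond (bigD1 q) //= pvecE eqxx big1 ?addr0 => [|q' /negbTE q'q].
  by case: ifP.
by rewrite pvecE q'q; case: ifP.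
Qed.

Lemma mul_pvo_l o q : mul (pvo o) (pv q) = pvo (obind (pcat^~ q) o).
Proof. by case: o => [p|] /=; rewrite ?mul_pvec ?linear0l. Qed.

Lemma mul_pvo_r p o : mul (pv p) (pvo o) = pvo (obind (pcat p) o).
Proof. by case: o => [q|] /=; rewrite ?mul_pvec ?linear0r. Qed.

Lemma kQmulA x y z : mul (mul x y) z = mul x (mul y z).
Proof.
rewrite [x]kQ_pvec_decomp !linear_sumlz; apply: eq_bigr => p _.
rewrite !linearZl_LR; congr (_ *: _).
rewrite [y]kQ_pvec_decomp linear_sumr !linear_sumlz linear_sumr; apply: eq_bigr => q _.
rewrite !(linearZl_LR, linearZr_LR); congr (_ *: _).
rewrite [z]kQ_pvec_decomp !linear_sumr; apply: eq_bigr => r _.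
rewrite !linearZr_LR; congr (_ *: _).
by rewrite /= mul_pvec mul_pvo_l mul_pvec mul_pvo_r pcatA.
Qed.

Lemma mul_pvec_l_diag p y : mul (pv p) y p = y (epath (pend p)).
Proof.
rewrite mul_pvec_l_coef (big_pred1 (epath (pend p))) // => q.
exact: pconcat_unit_r.
Qed.

Lemma mul_pvec_r_diag x p : mul x (pv p) p = x (epath (pstart p)).
Proof.
rewrite mul_pvec_r_coef (big_pred1 (epath (pstart p))) // => q.
exact: pconcat_unit_l.
Qed.

Section MonomialIdeal.
Variable Z : {set qpath Q}.
Hypothesis Zlen : forall z, z \in Z -> (2 <= plen z)%N.
Local Notation I := (pideal k Z).
Implicit Types (f g : 'End(A)).

Lemma pideal_gen p z q : z \in Z -> mul (mul (pv p) (pv z)) (pv q) \in I.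
Proof.
move=> Zz; rewrite memvE.
by apply: (sumv_sup p) => //; apply: (sumv_sup z) => //; apply: (sumv_sup q).
Qed.

Lemma pideal_genE p z q :
  mul (mul (pv p) (pv z)) (pv q) = pvo (obind (pcat^~ q) (pcat p z)).
Proof. by rewrite mul_pvec mul_pvo_l. Qed.

Lemma pideal_ind (P : A -> Prop) :
  P 0 -> (forall c x y, P x -> P y -> P (c *: x + y)) ->
  (forall p z q, z \in Z -> P (mul (mul (pv p) (pv z)) (pv q))) ->
  forall x, x \in I -> P x.
Proof.
move=> P0 PP Pgen.
have PD x y : P x -> P y -> P (x + y).
  by move=> Px Py; rewrite -[x]scale1r; apply: PP.
have PZ c x : P x -> P (c *: x).
  by move=> Px; rewrite -[c *: x]addr0; apply: PP.
move=> x /memv_sumP[xs xsI ->]; apply: big_ind => // p _.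
have /memv_sumP[ys ysI ->] := xsI p isT; apply: big_ind => // z Zz.
have /memv_sumP[zs zsI ->] := ysI z Zz; apply: big_ind => // q _.
by have /vlineP[c ->] := zsI q isT; apply/PZ/Pgen.
Qed.

Lemma pideal_mul_gen z x y : z \in Z -> mul (mul x (pv z)) y \in I.
Proof.
move=> Zz; rewrite [x]kQ_pvec_decomp [y]kQ_pvec_decomp linear_sumr.
apply: memv_suml => q _; rewrite linearZr_LR; apply: memvZ.
rewrite !linear_sumlz; apply: memv_suml => p _.
by rewrite !linearZl_LR; apply/memvZ/pideal_gen.
Qed.

Lemma pidealMl x y : y \in I -> mul x y \in I.
Proof.
move: y; apply: pideal_ind => [|c y1 y2 Iy1 Iy2|p z q Zz].
- by rewrite linear0r mem0v.
- by rewrite linearPr memvD ?memvZ.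
- by rewrite -!kQmulA pideal_mul_gen.
Qed.

Lemma pidealMr x y : x \in I -> mul x y \in I.
Proof.
move: x; apply: pideal_ind => [|c x1 x2 Ix1 Ix2|p z q Zz].
- by rewrite linear0l mem0v.
- by rewrite linearPl memvD ?memvZ.
- by rewrite kQmulA pideal_mul_gen.
Qed.

Lemma pideal_coef_short x t : (plen t < 2)%N -> x \in I -> x t = 0.
Proof.
move=> t_short; move: x; apply: pideal_ind => [|c x y xt yt|p z q Zz].
- by rewrite ffunE.
- by rewrite !ffunE xt yt scaler0 addr0.
rewrite pideal_genE pvoE; case pzs: (pcat p z) => [s|] //=.
case sqt: (pcat s q) => [t'|] //=; case: eqP => // -[t't]; subst t'.
move/pcatP/pconcat_plen: pzs; move/pcatP/pconcat_plen: sqt.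
by have := Zlen Zz; lia.
Qed.

Lemma derL_add f g : derL Z f -> derL Z g -> derL Z (f + g).
Proof.
move=> [fI fD] [gI gD]; split=> [x Ix|x y]; rewrite !add_lfunE.
  by rewrite memvD ?fI ?gI.
by rewrite linearDr linearDl addrACA opprD addrACA memvD ?fD ?gD.
Qed.

Lemma derL_scale c f : derL Z f -> derL Z (c *: f).
Proof.
move=> [fI fD]; split=> [x Ix|x y]; rewrite !scale_lfunE.
  by rewrite memvZ ?fI.
by rewrite linearZr_LR linearZl_LR -scalerDr -scalerBr memvZ ?fD.
Qed.

Lemma derL0 : derL Z (0 : 'End(A)).
Proof.
by split=> [x _|x y]; rewrite !zero_lfunE ?linear0l ?linear0r ?addr0 ?subrr mem0v.
Qed.

Lemma commutator_leibniz (u x y : A) :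
  mul (mul x y) u - mul u (mul x y)
  = mul x (mul y u - mul u y) + mul (mul x u - mul u x) y.
Proof. by rewrite linearBr linearBl /= !kQmulA addrA subrK. Qed.

Lemma innL_derL f : innL Z f -> derL Z f.
Proof.
case=> a fa.
have [g gI fE] : exists2 g : A -> A,
    (forall x, g x \in I) & forall x, f x = g x + (mul x a - mul a x).
  by exists (fun x => f x - (mul x a - mul a x)) => // x; rewrite subrK.
split=> [x Ix|x y].
  by rewrite fE; exact: memvD (gI x) (memvB (pidealMr _ Ix) (pidealMl _ Ix)).
rewrite !fE linearDr linearDl /= addrACA opprD addrACA.
rewrite commutator_leibniz subrr addr0.
exact: memvB (gI _) (memvD (pidealMl _ (gI y)) (pidealMr _ (gI x))).
Qed.

Lemma nullL_innL f : nullL Z f -> innL Z f.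
Proof. by move=> fI; exists 0 => x; rewrite linear0l linear0r subrr subr0 fI. Qed.

Definition arrow_der a x : A :=
  [ffun r => (count_mem a (parrows r))%:R * x r : k^o].

Lemma arrow_der_is_linear a : linear (arrow_der a).
Proof. by move=> c x y; apply/ffunP => r; rewrite !ffunE mulrDr mulrCA. Qed.

HB.instance Definition _ a :=
  GRing.isLinear.Build k A A *:%R (arrow_der a) (arrow_der_is_linear a).

Local Notation D a := (linfun (arrow_der a)).

Lemma arrow_der_pvec a p :
  arrow_der a (pv p) = (count_mem a (parrows p))%:R *: pv p.
Proof.
by apply/ffunP => r; rewrite !ffunE; case: eqP => [->|_]; rewrite ?mulr0 ?scaler0.
Qed.

Lemma arrow_der_leibniz a x y :
  arrow_der a (mul x y) = mul x (arrow_der a y) + mul (arrow_der a x) y.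
Proof.
apply/ffunP => r; rewrite !ffunE big_distrr -big_split; apply: eq_bigr => p _.
rewrite big_distrr -big_split; apply: eq_bigr => q /and3P[_ _ /eqP ->].
by rewrite !ffunE count_cat natrD /=; ring.
Qed.

Lemma arrow_der_pideal a x : x \in I -> arrow_der a x \in I.
Proof.
move: x; apply: pideal_ind => [|c x y Ix Iy|p z q Zz].
- by rewrite linear0 mem0v.
- by rewrite linearP memvD ?memvZ.
have := pideal_gen p q Zz; rewrite pideal_genE.
by case: (obind _ _) => [t|] /= It; rewrite ?linear0 ?arrow_der_pvec ?memvZ.
Qed.

Lemma arrow_derL a : derL Z (D a).
Proof.
split=> [x|x y]; rewrite !lfunE /=; first exact: arrow_der_pideal.
by rewrite arrow_der_leibniz subrr mem0v.
Qed.

Definition arrow_ders : #|Q1 Q|.-tuple 'End(A) :=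
  [tuple D (enum_val i) | i < #|Q1 Q|].

Lemma arrow_dersE (i : 'I_#|Q1 Q|) : arrow_ders`_i = D (enum_val i).
Proof. by rewrite -tnth_nth tnth_mktuple. Qed.

Lemma arrow_ders_coef (c : 'I_#|Q1 Q| -> k) j p : parrows p = [:: enum_val j] ->
  (\sum_i c i *: arrow_ders`_i) (pv p) p = c j.
Proof.
move=> pj; rewrite sum_lfunE sum_ffunE (bigD1 j) //= big1 ?addr0 => [|i ij].
  rewrite scale_lfunE kQ_scaleE arrow_dersE lfunE /= arrow_der_pvec kQ_scaleE.
  by rewrite pvecE pj /= !eqxx /= mulr1n !mulr1.
rewrite scale_lfunE kQ_scaleE arrow_dersE lfunE /= arrow_der_pvec kQ_scaleE pj /=.
by rewrite (inj_eq enum_val_inj) eq_sym (negbTE ij) mul0r mulr0.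
Qed.

Lemma free_arrow_ders : free arrow_ders.
Proof.
apply/freeP => c c0 j; have [p [_ pj]] := arrow_qpath (enum_val j).
by rewrite -(arrow_ders_coef c pj) c0 zero_lfunE ffunE.
Qed.

Lemma dim_arrow_ders : \dim <<arrow_ders>> = #|Q1 Q|.
Proof. by move/eqP: free_arrow_ders; rewrite size_tuple. Qed.

Lemma innL_coef_short f x0 p : (forall x, f x - (mul x x0 - mul x0 x) \in I) ->
  (plen p < 2)%N -> f (pv p) p = x0 (epath (pend p)) - x0 (epath (pstart p)).
Proof.
move=> fx0 p_short; have := pideal_coef_short p_short (fx0 (pv p)).
rewrite !kQ_subE mul_pvec_l_diag mul_pvec_r_diag => /eqP.
by rewrite subr_eq0 => /eqP.
Qed.

(* The inner derivation x |-> x e_v - e_v x, expressed through the D a. *)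
Definition vertex_der v : 'End(A) :=
  \sum_a ((qtgt a == v)%:R - (qsrc a == v)%:R) *: D a.

Lemma sum_vertex_der (lam : Q0 Q -> k) :
  \sum_v lam v *: vertex_der v = \sum_a (lam (qtgt a) - lam (qsrc a)) *: D a.
Proof.
have sum_delta w : \sum_v lam v * (w == v)%:R = lam w.
  rewrite (bigD1 w) //= eqxx mulr1 big1 ?addr0 // => v.
  by rewrite eq_sym => /negbTE ->; rewrite mulr0.
under eq_bigr => v _ do rewrite scaler_sumr.
rewrite exchange_big; apply: eq_bigr => a _.
under eq_bigr => v _ do rewrite scalerA.
rewrite -scaler_suml; under eq_bigr => v _ do rewrite mulrBr.
by rewrite sumrB !sum_delta.
Qed.

Lemma innL_arrow_ders_span v0 f : innL Z f -> f \in <<arrow_ders>>%VS ->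
  f \in <<[seq vertex_der v | v <- enum (predC1 v0)]>>%VS.
Proof.
case=> x0 fx0 fX; pose lam v := x0 (epath v) - x0 (epath v0).
have coordE i :
    coord arrow_ders i f = lam (qtgt (enum_val i)) - lam (qsrc (enum_val i)).
  have [p [ps pa]] := arrow_qpath (enum_val i).
  rewrite -[LHS](arrow_ders_coef (coord arrow_ders ^~ f) pa) -(coord_span fX).
  rewrite (innL_coef_short fx0) ?/plen ?pa // pendE ps pa.
  by rewrite /lam opprB addrA subrK.
have -> : f = \sum_(v | v != v0) lam v *: vertex_der v.
  rewrite [LHS](coord_span fX).
  rewrite (eq_bigr _ (fun i _ => congr2 _ (coordE i) (arrow_dersE i))) /=.
  rewrite -(big_enum_val (fun a => (lam (qtgt a) - lam (qsrc a)) *: D a)) /=.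
  by rewrite -sum_vertex_der (bigD1 v0) //= /lam subrr scale0r add0r.
apply: memv_suml => v v'v0; apply/memvZ/memv_span.
by apply: map_f; rewrite mem_enum.
Qed.

Lemma ldim_derL_ge (v0 : Q0 Q) :
  (ldim (@innL k Q Z) + #|Q1 Q| <= ldim (@derL k Q Z) + #|Q0 Q|.-1)%N.
Proof.
have null0 : nullL Z (0 : 'End(A)) by move=> x; rewrite zero_lfunE mem0v.
have [U [dimU Uinn]] := ldim_attained (nullL_innL null0).
have dim_add : (\dim (U + <<arrow_ders>>) <= ldim (@derL k Q Z))%N.
  apply: ldim_sup => _ /memv_addP[f Uf [g Xg ->]].
  apply: derL_add; first exact/innL_derL/Uinn.
  rewrite (coord_span Xg); apply: big_ind => [|f1 f2|i _]; first exact: derL0.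
    exact: derL_add.
  by rewrite arrow_dersE; apply/derL_scale/arrow_derL.
have dim_cap : (\dim (U :&: <<arrow_ders>>) <= #|Q0 Q|.-1)%N.
  have : (U :&: <<arrow_ders>>
          <= <<[seq vertex_der v | v <- enum (predC1 v0)]>>)%VS.
    by apply/subvP => f /memv_capP[/Uinn]; apply: innL_arrow_ders_span.
  move/dimvS/leq_trans; apply; apply: leq_trans (dim_span _) _.
  by rewrite size_map -cardE cardC1.
by have := dimv_sum_cap U <<arrow_ders>>; rewrite dim_arrow_ders dimU; lia.
Qed.

End MonomialIdeal.

End PathAlgebra.

Lemma dim_HH1E (k : fieldType) (Q : quiver) (Z : {set qpath Q}) :
  dim_HH1 k Z = (ldim (@derL k Q Z) - ldim (@innL k Q Z))%N.
Proof.
have := ldim_le (@nullL_innL k Q Z).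
by rewrite /dim_HH1 /dim_Der /dim_Inn; lia.
Qed.

Theorem corollary5p2 (k : fieldType) (Q : quiver) (Z : {set qpath Q}) :
  connected_quiver Q ->
  acyclic Q ->
  (forall z, z \in Z -> 2 <= plen z)%N ->
  minimal_paths Z ->
  (1 + #|Q1 Q| <= dim_HH1 k Z + #|Q0 Q|)%N.
Proof.
move=> [Q0_gt0 _] _ Zlen _; have /card_gt0P[v0 _] := Q0_gt0.
by rewrite dim_HH1E; have := ldim_derL_ge k Zlen v0; lia.
Qed.
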